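(* Let $I\subset S=K[x_1,\dots,x_t]$ be an $\mathfrak m$-primary monomial ideal with $v(I)=\alpha(I)-1$. Then $v(I^{n+1})=v(I)+n\,\alpha(I)$ for all $n\ge 1$.
   Context: $K$ is a field, $S$ is standard graded and $\mathfrak m=\langle x_1,\dots,x_t\rangle$. For a proper graded ideal $J$, the $v$-number is $v(J)=\min\{k\ge 0 : \exists f\in S_k,\ \mathcal P\in\operatorname{Ass}(S/J) \text{ with } (J:f)=\mathcal P\}$. $\alpha(I)=\min\{\deg f : f\in I\setminus\{0\} \text{ homogeneous}\}$. *)

From HB Require Import structures.
From mathcomp Require Import all_boot all_algebra.
From mathcomp Require Import mpoly.
Set Implicit Arguments. Unset Strict Implicit. Unset Printing Implicit Defensive.
Import GRing.Theory.
Local Open Scope ring_scope.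

Section Ideals.
Variables (K : fieldType) (t : nat).
Local Notation S := {mpoly K[t]}.

Definition sset := S -> Prop.

Definition same_set (A B : sset) : Prop := forall f, A f <-> B f.

Definition is_ideal (I : sset) : Prop :=
  [/\ I 0, (forall a b, I a -> I b -> I (a + b)) & (forall r a, I a -> I (r * a))].

Definition gen (G : sset) : sset := fun f =>
  exists (s : seq (S * S)),
    (forall p, p \in s -> G p.2) /\ f = \sum_(p <- s) p.1 * p.2.

Definition ideal_mul (I J : sset) : sset :=
  gen (fun h => exists a b, [/\ I a, J b & h = a * b]).

Fixpoint ideal_pow (I : sset) (k : nat) : sset :=
  match k with
  | 0 => fun _ => True
  | k'.+1 => ideal_mul (ideal_pow I k') I
  end.

Definition maxm : sset := gen (fun g => exists i : 'I_t, g = 'X_i).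

Definition monomial_ideal (I : sset) : Prop :=
  is_ideal I /\
  exists G : sset, (forall g, G g -> exists m : 'X_{1..t}, g = 'X_[m])
                   /\ same_set I (gen G).

Definition is_prime_ideal (P : sset) : Prop :=
  [/\ is_ideal P, ~ P 1 & forall a b, P (a * b) -> P a \/ P b].

Definition is_primary_ideal (Q : sset) : Prop :=
  [/\ is_ideal Q, ~ Q 1 &
      forall a b, Q (a * b) -> Q a \/ exists n, Q (b ^+ n)].

Definition radical (I : sset) : sset := fun f => exists n, I (f ^+ n).

Definition m_primary (I : sset) : Prop :=
  is_primary_ideal I /\ same_set (radical I) maxm.

Definition colon (J : sset) (f : S) : sset := fun g => J (g * f).

(* associated primes of S/J *)
Definition ass (J : sset) (P : sset) : Prop :=
  is_prime_ideal P /\ exists f : S, same_set (colon J f) P.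

Definition vnum_witness (J : sset) (k : nat) : Prop :=
  exists (f : S) (P : sset), f \is ishomog1 k (@mdeg t) /\ ass J P /\ same_set (colon J f) P.

Definition is_vnumber (J : sset) (k : nat) : Prop :=
  vnum_witness J k /\ forall k', vnum_witness J k' -> (k <= k')%N.

Definition alpha_witness (I : sset) (a : nat) : Prop :=
  exists f : S, [/\ f != 0, f \is ishomog1 a (@mdeg t) & I f].

Definition is_alpha (I : sset) (a : nat) : Prop :=
  alpha_witness I a /\ forall a', alpha_witness I a' -> (a <= a')%N.

End Ideals.

(** Every element of a monomial ideal I with initial degree a has all its
    monomials of degree at least a, so nonzero homogeneous elements of I^k
    have degree at least k a.  Since I is m-primary, every associated prime of
    I^k contains m and hence, being proper, equals m.  If f realises v(I),
    with (I : f) = m and deg f = a - 1, and g is in I of degree a, then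
    F = f g^n satisfies m F in I^(n+1) while F is not in I^(n+1) for degree
    reasons, so (I^(n+1) : F) = m and v(I^(n+1)) <= a - 1 + n a.  Conversely,
    if (I^(n+1) : f) = m then x_i f is a nonzero element of I^(n+1) of degree
    deg f + 1, which gives deg f >= (n + 1) a - 1. *)
From HB Require Import structures.
From mathcomp Require Import all_boot all_algebra.
From mathcomp Require Import mpoly.
From mathcomp Require Import zify.
Set Implicit Arguments. Unset Strict Implicit. Unset Printing Implicit Defensive.
Import GRing.Theory.
Local Open Scope ring_scope.

Section Ideals.
Variables (K : fieldType) (t : nat).
Local Notation S := {mpoly K[t]}.
Implicit Types (G I J P Q : sset K t) (f g h : S).

Lemma ideal_sum J (T : eqType) (r : seq T) (F : T -> S) :
  is_ideal J -> (forall i, i \in r -> J (F i)) -> J (\sum_(i <- r) F i).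
Proof. by move=> [J0 JD _] JF; rewrite big_seq; apply: big_ind. Qed.

Lemma idealB J f g : is_ideal J -> J f -> J g -> J (f - g).
Proof. by move=> [_ JD JM] Jf Jg; rewrite -mulN1r; apply/JD/JM. Qed.

Lemma ideal_mpolyC J c f : is_ideal J -> c != 0 -> J (c%:MP * f) -> J f.
Proof.
by move=> [_ _ JM] c0 /(JM c^-1%:MP); rewrite mulrA -mpolyCM mulVf ?mul1r.
Qed.

Lemma mem_gen G g : G g -> gen G g.
Proof.
move=> Gg; exists [:: (1, g)]; rewrite big_seq1 mul1r.
by split=> // p; rewrite inE => /eqP ->.
Qed.

Lemma gen_ideal G : is_ideal (gen G).
Proof.
split; first by exists [::]; rewrite big_nil; split.
  move=> _ _ [s1 [G1 ->]] [s2 [G2 ->]]; exists (s1 ++ s2); rewrite big_cat.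
  by split=> // p; rewrite mem_cat => /orP [/G1 | /G2].
move=> r _ [s [Gs ->]]; exists [seq (r * p.1, p.2) | p <- s]; split.
  by move=> q /mapP [p ps ->]; apply: Gs ps.
by rewrite big_map mulr_sumr; apply: eq_bigr => p _; rewrite mulrA.
Qed.

Lemma gen_sub G J : is_ideal J -> (forall g, G g -> J g) -> forall f, gen G f -> J f.
Proof.
move=> Jid GJ _ [s [Gs ->]]; apply: ideal_sum => // p ps.
by case: Jid => _ _ JM; apply/JM/GJ/Gs.
Qed.

Lemma gen_neq0 G f : gen G f -> f != 0 -> exists g, G g.
Proof.
by case=> [[|p s] [Gs ->]]; [rewrite big_nil eqxx | exists p.2; apply/Gs/mem_head].
Qed.

Lemma ideal_pow_ideal I k : is_ideal (ideal_pow I k).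
Proof. by case: k => [|k]; [split | exact: gen_ideal]. Qed.

Lemma ideal_powSr I k f g : ideal_pow I k f -> I g -> ideal_pow I k.+1 (f * g).
Proof. by move=> If Ig; apply: mem_gen; exists f, g. Qed.

Lemma ideal_pow_exp I k f : I f -> ideal_pow I k (f ^+ k).
Proof. by move=> If; elim: k => [|k IHk] //; rewrite exprSr; apply: ideal_powSr. Qed.

Lemma radical_ideal_pow I k f : radical I f -> radical (ideal_pow I k) f.
Proof. by case=> N IfN; exists (N * k)%N; rewrite exprM; apply: ideal_pow_exp. Qed.

Lemma colon_ideal J f : is_ideal J -> is_ideal (colon J f).
Proof.
move=> [J0 JD JM]; split=> [|g h | r g]; rewrite /colon ?mul0r // => Jg.
  by move=> Jh; rewrite mulrDl; apply: JD.
by rewrite -mulrA; apply: JM.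
Qed.

Lemma sub_colon J f g : is_ideal J -> J g -> colon J f g.
Proof. by move=> [_ _ JM] Jg; rewrite /colon mulrC; apply: JM. Qed.

Lemma colon_neq0 J f P : J 0 -> ~ P 1 -> same_set (colon J f) P -> f != 0.
Proof.
by move=> J0 P1 EP; apply: contra_notN P1 => /eqP f0; apply/EP; rewrite /colon f0 mulr0.
Qed.

Lemma prime_ideal_exp P f N : is_prime_ideal P -> P (f ^+ N) -> P f.
Proof.
move=> [_ P1 PM]; elim: N => [|N IHN]; first by rewrite expr0.
by rewrite exprS => /PM [].
Qed.

Lemma prime_sup_maxm J P :
  is_prime_ideal P -> (forall g, J g -> P g) -> (forall i, radical J 'X_i) ->
  forall h, maxm h -> P h.
Proof.
move=> Pp JP radJ; apply: gen_sub; first by case: Pp.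
by move=> _ [i ->]; have [N /JP] := radJ i; apply: prime_ideal_exp.
Qed.

Lemma maxm_ideal : is_ideal (@maxm K t).
Proof. exact: gen_ideal. Qed.

Lemma maxm_X (m : 'X_{1..t}) : m != 0%MM -> maxm ('X_[m] : S).
Proof.
move=> m0; have [i mi] : exists i, (0 < m i)%N.
  apply/existsP; apply: contraR m0 => /existsPn m0; apply/eqP/mnmP => i.
  by rewrite mnm0E; apply/eqP; rewrite -leqn0 leqNgt m0.
have Uim : (U_(i) <= m)%MM by apply/mnm_lepP => j; rewrite mnm1E; case: eqP => [<-|].
rewrite -(submK Uim) mpolyXD; case: maxm_ideal => _ _ JM.
by apply/JM/mem_gen; exists i.
Qed.

Lemma maxm_subC h : maxm (h - (h@_0%MM)%:MP).
Proof.
set h' := h - _; rewrite (mpolyE h'); apply: ideal_sum; first exact: maxm_ideal.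
move=> m mh'; have m0 : m != 0%MM.
  apply: contraTneq mh' => ->; rewrite -mcoeff_eq0.
  by rewrite mcoeffB mcoeffC eqxx mulr1 subrr.
by rewrite -mul_mpolyC; case: maxm_ideal => _ _ JM; apply/JM/maxm_X.
Qed.

Lemma maxm_maximal Q :
  is_ideal Q -> ~ Q 1 -> (forall h, maxm h -> Q h) -> forall h, Q h -> maxm h.
Proof.
move=> Qid Q1 mQ h Qh; have Qc : Q ((h@_0%MM)%:MP * 1).
  have -> : (h@_0%MM)%:MP * 1 = h - (h - (h@_0%MM)%:MP).
    by rewrite mulr1 opprB addrC subrK.
  exact: idealB Qid Qh (mQ _ (maxm_subC h)).
have [c0 | /(ideal_mpolyC Qid) /(_ Qc) //] := eqVneq (h@_0%MM) 0.
by have := maxm_subC h; rewrite c0 subr0.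
Qed.

Definition vanishes_below (d : nat) : sset K t :=
  fun f => forall m, (mdeg m < d)%N -> f@_m = 0.

Lemma vanishes_belowW d e f : (e <= d)%N -> vanishes_below d f -> vanishes_below e f.
Proof. by move=> ed fd m me; apply: fd; lia. Qed.

Lemma vanishes_belowM d e f g :
  vanishes_below d f -> vanishes_below e g -> vanishes_below (d + e) (f * g).
Proof.
move=> fd ge m mde; rewrite mcoeffM big1 // => k /eqP km.
have : (mdeg k.1 < d)%N || (mdeg k.2 < e)%N by have := mdegD k.1 k.2; rewrite -km; lia.
by case/orP => [/fd -> | /ge ->]; rewrite ?mul0r ?mulr0.
Qed.

Lemma vanishes_below_ideal d : is_ideal (vanishes_below d).
Proof.
split=> [m _ | f g fd gd m md | r f fd]; first by rewrite mcoeff0.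
  by rewrite mcoeffD fd ?gd ?addr0.
by rewrite -[d]add0n; apply: vanishes_belowM.
Qed.

Lemma vanishes_belowX (m : 'X_{1..t}) : vanishes_below (mdeg m) ('X_[m] : S).
Proof. by move=> k km; rewrite mcoeffX; case: eqP km => [-> | //]; rewrite ltnn. Qed.

Lemma maxm_vanishes_below1 h : maxm h -> vanishes_below 1 h.
Proof.
apply: gen_sub; first exact: vanishes_below_ideal.
by move=> _ [i ->]; rewrite -(mdeg1 i); apply: vanishes_belowX.
Qed.

Lemma dhomog_vanishes_below d e f :
  f != 0 -> f \is d.-homog for (@mdeg t) -> vanishes_below e f -> (e <= d)%N.
Proof.
move=> f0 fd fe; have /(dhomog_mf fd) /= lead_d := mlead_supp f0.
by rewrite leqNgt; apply: contra f0 => de; rewrite -mleadc_eq0 fe // lead_d.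
Qed.

Lemma ideal_pow_vanishes_below I d k :
  (forall f, I f -> vanishes_below d f) ->
  forall f, ideal_pow I k f -> vanishes_below (k * d) f.
Proof.
move=> Id; elim: k => [|k IHk] f; first by move=> _ m; rewrite mul0n.
apply: gen_sub; first exact: vanishes_below_ideal.
by move=> _ [g [h [Ig Ih ->]]]; rewrite mulSn addnC; apply/vanishes_belowM/Id/Ih/IHk.
Qed.

Lemma monomial_ideal_vanishes_below I a f :
  monomial_ideal I -> is_alpha I a -> I f -> vanishes_below a f.
Proof.
move=> [_ [G [Gmon EG]]] [_ amin] /EG; apply: gen_sub; first exact: vanishes_below_ideal.
move=> g Gg; have [m gm] := Gmon g Gg.
rewrite gm; apply: (vanishes_belowW _ (@vanishes_belowX m)); apply: amin.
exists 'X_[m]; split; first by rewrite -msupp_eq0 msuppX.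
  by rewrite dhomogX.
by apply/EG; rewrite -gm; apply: mem_gen.
Qed.

Lemma alpha_gt0 I a : (forall f, radical I f -> maxm f) -> alpha_witness I a -> (0 < a)%N.
Proof.
move=> radI [g [g0 ga Ig]]; apply: dhomog_vanishes_below g0 ga _.
by apply/maxm_vanishes_below1/radI; exists 1%N; rewrite expr1.
Qed.

Section PowerColon.
Variables (I : sset K t) (alpha : nat).
Hypotheses (I_ideal : is_ideal I) (I_vanishes : forall f, I f -> vanishes_below alpha f).
Hypothesis radical_X : forall i, radical I 'X_i.

Lemma ideal_pow_dhomog k d f :
  ideal_pow I k f -> f != 0 -> f \is d.-homog for (@mdeg t) -> (k * alpha <= d)%N.
Proof.
move=> /(ideal_pow_vanishes_below I_vanishes) fka f0 fd.
exact: dhomog_vanishes_below fka.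
Qed.

Lemma vnum_witness_pow_mul n d f P g :
  (d < alpha)%N -> f \is d.-homog for (@mdeg t) ->
  is_prime_ideal P -> same_set (colon I f) P ->
  g != 0 -> g \is alpha.-homog for (@mdeg t) -> I g ->
  vnum_witness (ideal_pow I n.+1) (d + n * alpha).
Proof.
move=> da fd Pp EP g0 ga Ig; set F := f * g ^+ n.
have Fd : F \is (d + n * alpha)%N.-homog for (@mdeg t).
  by rewrite mulnC; apply/dhomogM/dhomogMn.
have F0 : F != 0.
  by rewrite mulf_neq0 ?expf_neq0 //; apply: colon_neq0 EP; [case: I_ideal | case: Pp].
have FnotI : ~ ideal_pow I n.+1 F.
  by move=> /ideal_pow_dhomog /(_ F0 Fd); lia.
have PF h : P h -> colon (ideal_pow I n.+1) F h.
  move=> /EP Ihf; rewrite /colon /F mulrA mulrC.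
  by apply: ideal_powSr => //; apply: ideal_pow_exp.
have IP h : I h -> P h by move=> /(sub_colon f I_ideal) /EP.
have mP := prime_sup_maxm Pp IP radical_X.
have EF : same_set (colon (ideal_pow I n.+1) F) P.
  move=> h; split=> [Fh | /PF //]; apply/mP/(maxm_maximal _ _ _ Fh).
  - exact/colon_ideal/ideal_pow_ideal.
  - by rewrite /colon mul1r.
  - by move=> g' /mP /PF.
by exists F, P; do 3!split=> //; exists F.
Qed.

Lemma vnum_witness_pow_ge (i : 'I_t) n k :
  vnum_witness (ideal_pow I n) k -> (n * alpha <= k.+1)%N.
Proof.
move=> [f [P [fk [[Pp _] EP]]]]; have Jid := ideal_pow_ideal I n.
have JP g : ideal_pow I n g -> P g by move=> /(sub_colon f Jid) /EP.
have PX : P 'X_i.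
  apply: prime_sup_maxm Pp JP _ _ (mem_gen _) => [j|]; last by exists i.
  exact: radical_ideal_pow.
have f0 : f != 0 by apply: colon_neq0 EP; [case: Jid | case: Pp].
apply: (@ideal_pow_dhomog n k.+1 ('X_i * f)); first exact: (proj2 (EP _) PX).
  by rewrite mulf_neq0 // -msupp_eq0 msuppX.
by rewrite -add1n; apply: dhomogM fk; rewrite dhomogX /= mdeg1.
Qed.

End PowerColon.
End Ideals.
Unset Implicit Arguments.

Theorem proposition4p10 (K : fieldType) (t : nat) (I : sset K t)
  (vI aI : nat) :
  monomial_ideal I -> m_primary I ->
  is_vnumber I vI -> is_alpha I aI ->
  vI = (aI - 1)%N ->
  forall n : nat, (1 <= n)%N ->
    is_vnumber (ideal_pow I n.+1) (vI + n * aI)%N.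
Proof.
move=> Imon [[I_ideal _ _] radI] [[f [P [fv [[Pp _] EP]]]] _] alphaI vI_eq n _; subst vI.
have Ivan h : I h -> vanishes_below aI h by apply: monomial_ideal_vanishes_below.
have radX i : radical I 'X_i by apply/radI/mem_gen; exists i.
have [g [g0 ga Ig]] := proj1 alphaI.
have a_gt0 : (0 < aI)%N by apply: alpha_gt0 (proj1 alphaI) => h /radI.
split.
  by apply: (vnum_witness_pow_mul I_ideal Ivan radX n _ fv Pp EP g0 ga Ig); lia.
have /radI /gen_neq0 /(_ g0) [_ [i _]] : radical I g by exists 1%N; rewrite expr1.
by move=> k /(vnum_witness_pow_ge Ivan radX i); lia.
Qed.
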